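(* For $i\in\{0,1\}$, let $N_i\subseteq W({\rm G}_2)$ be the stabilizer of the root $\beta_i$ under the action of $W({\rm G}_2)$ on $\Psi^+$ described in the context. Then for every $a\in N_i$ we have $ae_ia^{-1}=e_i$ in ${\rm Br}({\rm G}_2)$.
   Context: Let $\delta$ be an indeterminate. ${\rm Br}({\rm G}_2)$ is the $\mathbb{Z}[\delta^{\pm1}]$-algebra generated by $r_0,r_1,e_0,e_1$ subject to the following relations: - $r_0^2=r_1^2=1$; - $r_ie_i=e_ir_i=e_i$ for $i=0,1$; - $e_0^2=\delta^3e_0$ and $e_1^2=\delta e_1$; - $r_0e_1e_0=r_1e_0$ and $e_0e_1r_0=e_0r_1$; - $e_1r_0e_1r_0e_1=e_1$ and $e_1r_0e_1r_0r_1=e_1r_0r_1r_0$; - $e_0r_1e_0=\delta^2e_0$; - $r_1r_0e_1r_0e_1=r_0r_1r_0e_1$; - $(r_1r_0)^6=1$. Let $\Psi$ be a root system of type ${\rm G}_2$ with simple roots $\beta_0$ (short) and $\beta_1$ (long), and positive roots $\Psi^+=\{\beta_0,\beta_1,\beta_0+\beta_1,2\beta_0+\beta_1,3\beta_0+\beta_1,3\beta_0+2\beta_1\}$. $W({\rm G}_2)$ is generated by the reflections $s_0,s_1$ in $\beta_0,\beta_1$. It acts on $\Psi^+$ by $w\cdot\beta=$ the unique element of $\Psi^+\cap\{\pm w\beta\}$. The subgroup of units of ${\rm Br}({\rm G}_2)$ generated by $r_0,r_1$ is isomorphic to $W({\rm G}_2)$ via $r_i\mapsto s_i$. Through this isomorphism,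 elements of $W({\rm G}_2)$ are regarded as elements of ${\rm Br}({\rm G}_2)$. *)

From HB Require Import structures.
From mathcomp Require Import all_boot all_order all_algebra.
Set Implicit Arguments. Unset Strict Implicit. Unset Printing Implicit Defensive.
Import Order.TTheory GRing.Theory Num.Theory.
Local Open Scope ring_scope.

(* A root c0*beta0 + c1*beta1 is encoded as the pair (c0, c1) : int * int.
   beta0 short, beta1 long; Cartan integers <beta1,beta0^v> = -3,
   <beta0,beta1^v> = -1. *)
Definition root := (int * int)%type.
Definition beta (i : 'I_2) : root := if val i == 0%N then (1, 0) else (0, 1).

Definition sref (i : 'I_2) (v : root) : root :=
  if val i == 0%N then (- v.1 + 3 * v.2, v.2) else (v.1, v.1 - v.2).

(* Elements of W(G2) are given by words in s_0, s_1; the word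
   [:: i1; ...; ik] denotes s_{i1} ... s_{ik}. *)
Definition wlin (w : seq 'I_2) (v : root) : root := foldr sref v w.

Definition posroots : seq root := [:: (1,0); (0,1); (1,1); (2,1); (3,1); (3,2)].

Definition wact (w : seq 'I_2) (b : root) : root :=
  let v := wlin w b in if v \in posroots then v else (- v.1, - v.2).

Definition in_stab (i : 'I_2) (w : seq 'I_2) : bool := wact w (beta i) == beta i.

(* An equation holds in Br(G2) iff it holds for every
   ring A with a central unit d and elements satisfying the relations
   (universal property of the presentation).  *)
Definition r_ (A : pzRingType) (r0 r1 : A) (i : 'I_2) : A :=
  if val i == 0%N then r0 else r1.
Definition e_ (A : pzRingType) (e0 e1 : A) (i : 'I_2) : A :=
  if val i == 0%N then e0 else e1.

Definition BrG2_rel (A : pzRingType) (d r0 r1 e0 e1 : A) : Prop :=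
  (* Z[d^{+-1}]-algebra structure: d is a central unit *)
  (forall x : A, d * x = x * d) /\
  (exists d' : A, d * d' = 1 /\ d' * d = 1) /\
  r0 * r0 = 1 /\ r1 * r1 = 1 /\
  r0 * e0 = e0 /\ e0 * r0 = e0 /\ r1 * e1 = e1 /\ e1 * r1 = e1 /\
  e0 * e0 = d ^+ 3 * e0 /\ e1 * e1 = d * e1 /\
  r0 * e1 * e0 = r1 * e0 /\ e0 * e1 * r0 = e0 * r1 /\
  e1 * r0 * e1 * r0 * e1 = e1 /\
  e1 * r0 * e1 * r0 * r1 = e1 * r0 * r1 * r0 /\
  e0 * r1 * e0 = d ^+ 2 * e0 /\
  r1 * r0 * e1 * r0 * e1 = r0 * r1 * r0 * e1 /\
  (r1 * r0) ^+ 6 = 1.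

Definition rword (A : pzRingType) (r0 r1 : A) (w : seq 'I_2) : A :=
  \prod_(j <- w) r_ r0 r1 j.

(** The Weyl group W(G2) is dihedral of order 12: every word in s0, s1 reduces, using
    only s_j^2 = 1 and the braid relation (s0 s1)^3 = (s1 s0)^3, to an alternating word of
    length at most 6.  Since r0, r1 satisfy these relations in Br(G2) and the reflections
    satisfy them on the root lattice, we may replace a word by its normal form on both
    sides of the statement.  Checking the fourteen normal forms shows that the stabilizer
    of beta_i is {1, s_i, w0 s_i, w0}, with w0 = (s0 s1)^3 = -1.  Now r_i e_i r_i = e_i,
    and the conjugation of e_i by w0 s_i is a short computation with the relations of
    Br(G2); the remaining element w0 = s_i (w0 s_i) follows. *)

From Pilot Require Import Defs.
From mathcomp Require Import all_boot all_order all_algebra.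
From mathcomp Require Import ring.
Import GRing.Theory.
Set Implicit Arguments. Unset Strict Implicit. Unset Printing Implicit Defensive.
Local Open Scope ring_scope.

Definition other (j : 'I_2) : 'I_2 := if val j == 0%N then ord_max else ord0.

Fixpoint alt_word (j : 'I_2) (n : nat) : seq 'I_2 :=
  if n is n'.+1 then j :: alt_word (other j) n' else [::].

Lemma otherK : involutive other.
Proof. by case=> [[|[|//]] ?]; apply/val_inj. Qed.

Lemma ord2_neq_other (j k : 'I_2) : k != j -> k = other j.
Proof. by case: j k => [[|[|//]] ?] [[|[|//]] ?] //= _; apply/val_inj. Qed.

Lemma ord2_cases (j : 'I_2) : j = ord0 \/ j = ord_max.
Proof. by case: j => [[|[|//]] ?]; [left|right]; apply/val_inj. Qed.

(* [(k, n)] stands for [alt_word k n]; the two alternating words of length 6 represent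
   the same element, which is why [cons_nf] may map length 7 down to length 5. *)
Definition cons_nf (j : 'I_2) (p : 'I_2 * nat) : 'I_2 * nat :=
  let: (k, n) := p in
  if n == 0%N then (j, 1%N)
  else if k == j then (other j, n.-1)
  else if (n < 6)%N then (j, n.+1) else (k, 5%N).

Definition nf (w : seq 'I_2) : 'I_2 * nat := foldr cons_nf (ord0, 0%N) w.
Definition nf_word (w : seq 'I_2) : seq 'I_2 := alt_word (nf w).1 (nf w).2.

Lemma nf_length_le6 (w : seq 'I_2) : ((nf w).2 <= 6)%N.
Proof.
elim: w => [|j w] //=; rewrite /nf /=; case: (foldr _ _ w) => k n /= le_n6.
case: eqP => // _; case: eqP => _ /=; first exact: leq_trans (leq_pred n) le_n6.
by case: ltnP.
Qed.

Section DihedralWords.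
Variables (T : Type) (g : 'I_2 -> T -> T).
Hypothesis g_invol : forall j x, g j (g j x) = x.
Hypothesis g_braid : forall x, foldr g x (alt_word ord0 6) = foldr g x (alt_word ord_max 6).

Lemma foldr_alt_braid (j : 'I_2) x :
  foldr g x (alt_word j 6) = foldr g x (alt_word (other j) 6).
Proof. by case: (ord2_cases j) => ->; [|symmetry]; exact: g_braid. Qed.

Lemma foldr_cons_nf (j k : 'I_2) (n : nat) x : (n <= 6)%N ->
  foldr g x (j :: alt_word k n) =
  foldr g x (alt_word (cons_nf j (k, n)).1 (cons_nf j (k, n)).2).
Proof.
case: n => [|n] // le_n6; rewrite [in RHS]/=.
case: eqP => [->|/eqP/ord2_neq_other ->]; first by rewrite /= g_invol.
case: ltnP => // n6; have [->] : n.+1 = 6%N by apply/eqP; rewrite eqn_leq le_n6.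
by rewrite -cat1s foldr_cat foldr_alt_braid otherK /= g_invol.
Qed.

Lemma foldr_nf_word w x : foldr g x w = foldr g x (nf_word w).
Proof.
rewrite /nf_word; elim: w => [|j w IHw] //=; rewrite IHw.
by have := nf_length_le6 w; rewrite /nf; case: (foldr _ _ w) => k n /=; apply: foldr_cons_nf.
Qed.
End DihedralWords.

Lemma sref_involutive (j : 'I_2) (v : Defs.root) : sref j (sref j v) = v.
Proof. by case: v => a b; case: (ord2_cases j) => ->; rewrite /sref /=; congr pair; ring. Qed.

Lemma sref_braid (v : Defs.root) :
  foldr sref v (alt_word ord0 6) = foldr sref v (alt_word ord_max 6).
Proof. by case: v => a b; rewrite /sref /=; congr pair; ring. Qed.

Lemma in_stab_nf_word (i : 'I_2) (w : seq 'I_2) : in_stab i w = in_stab i (nf_word w).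
Proof.
by rewrite /in_stab /wact /wlin -foldr_nf_word //; [apply: sref_involutive | apply: sref_braid].
Qed.

(* The reduced words of 1, s_i, w0 s_i and the two reduced words of w0. *)
Definition stab_words (i : 'I_2) : seq (seq 'I_2) :=
  [:: [::]; [:: i]; alt_word (other i) 5; i :: alt_word (other i) 5;
      rcons (alt_word (other i) 5) i].

Lemma in_stab_alt_word (i k : 'I_2) (n : nat) :
  (n <= 6)%N -> in_stab i (alt_word k n) -> alt_word k n \in stab_words i.
Proof. by case: (ord2_cases i) (ord2_cases k) => -> [] ->; do 7 case: n => [|n] //. Qed.

Section WordImage.
Variables (A : pzRingType) (r0 r1 : A).
Hypotheses (r0K : r0 * r0 = 1) (r1K : r1 * r1 = 1).

Lemma rword_cons j w : rword r0 r1 (j :: w) = r_ r0 r1 j * rword r0 r1 w.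
Proof. exact: big_cons. Qed.

Lemma rword_cat w1 w2 : rword r0 r1 (w1 ++ w2) = rword r0 r1 w1 * rword r0 r1 w2.
Proof. exact: big_cat. Qed.

Lemma foldr_rword w x : foldr (fun j y => r_ r0 r1 j * y) x w = rword r0 r1 w * x.
Proof.
by elim: w => [|j w IHw] /=; rewrite ?rword_cons ?IHw ?mulrA // /rword big_nil mul1r.
Qed.

Lemma r_K j : r_ r0 r1 j * r_ r0 r1 j = 1.
Proof. by rewrite /r_; case: ifP. Qed.

Lemma rwordK w : rword r0 r1 w * rword r0 r1 (rev w) = 1.
Proof.
elim: w => [|j w IHw]; first by rewrite /rword big_nil mulr1.
by rewrite rev_cons -cats1 rword_cat rword_cons -mulrA [X in _ * X]mulrA IHw mul1r
  /rword big_seq1 r_K.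
Qed.

Lemma rword_revK w : rword r0 r1 (rev w) * rword r0 r1 w = 1.
Proof. by rewrite -{2}(revK w) rwordK. Qed.

Lemma rword_rev_eq w w' :
  rword r0 r1 w = rword r0 r1 w' -> rword r0 r1 (rev w) = rword r0 r1 (rev w').
Proof.
by move=> eq_ww'; rewrite -[LHS]mulr1 -(rwordK w') -eq_ww' mulrA rword_revK mul1r.
Qed.

Hypothesis r1r0_order6 : (r1 * r0) ^+ 6 = 1.

Lemma rword_braid : rword r0 r1 (alt_word ord0 6) = rword r0 r1 (alt_word ord_max 6).
Proof.
(* (r1 r0)^6 = 1 makes the alternating word of length 6 its own inverse, and its
   reversal is also its inverse. *)
have sq1 : rword r0 r1 (alt_word ord_max 6) * rword r0 r1 (alt_word ord_max 6) = 1.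
  by rewrite -r1r0_order6 /rword !big_cons big_nil /= !mulr1 !exprS expr0 mulr1 !mulrA.
have -> : alt_word ord0 6 = rev (alt_word ord_max 6) by [].
by rewrite -[LHS]mulr1 -sq1 mulrA rword_revK mul1r.
Qed.

Lemma rword_nf_word w : rword r0 r1 w = rword r0 r1 (nf_word w).
Proof.
rewrite -[LHS]mulr1 -[RHS]mulr1 -!foldr_rword -foldr_nf_word // => [j x|x].
  by rewrite mulrA r_K mul1r.
by rewrite !foldr_rword rword_braid.
Qed.

Definition conj_fixes (x : A) (w : seq 'I_2) : Prop :=
  rword r0 r1 w * x * rword r0 r1 (rev w) = x.

Lemma conj_fixes_cat x w1 w2 :
  conj_fixes x w1 -> conj_fixes x w2 -> conj_fixes x (w1 ++ w2).
Proof.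
rewrite /conj_fixes rev_cat !rword_cat => fix1 fix2.
by rewrite !mulrA -(mulrA (rword r0 r1 w1)) -(mulrA (rword r0 r1 w1)) fix2 fix1.
Qed.
End WordImage.

Section BrauerG2Relations.
Variables (A : pzRingType) (r0 r1 e0 e1 : A).
Hypotheses (r0K : r0 * r0 = 1) (r1K : r1 * r1 = 1).
Hypotheses (r0e0 : r0 * e0 = e0) (e0r0 : e0 * r0 = e0).
Hypotheses (r1e1 : r1 * e1 = e1) (e1r1 : e1 * r1 = e1).
Hypotheses (r0e1e0 : r0 * e1 * e0 = r1 * e0) (e0e1r0 : e0 * e1 * r0 = e0 * r1).
Hypothesis e1r0e1r0r1 : e1 * r0 * e1 * r0 * r1 = e1 * r0 * r1 * r0.
Hypothesis r1r0e1r0e1 : r1 * r0 * e1 * r0 * e1 = r0 * r1 * r0 * e1.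

(* The relations in a left context, so that they rewrite inside left-nested products. *)
Let mulr_r0K x : x * r0 * r0 = x. Proof. by rewrite -mulrA r0K mulr1. Qed.
Let mulr_r1K x : x * r1 * r1 = x. Proof. by rewrite -mulrA r1K mulr1. Qed.
Let mulr_r1e1 x : x * r1 * e1 = x * e1. Proof. by rewrite -mulrA r1e1. Qed.
Let mulr_e1r1 x : x * e1 * r1 = x * e1. Proof. by rewrite -mulrA e1r1. Qed.
Let mulr_r1e0 x : x * r1 * e0 = x * r0 * e1 * e0.
Proof. by rewrite -mulrA -r0e1e0 !mulrA. Qed.
Let mulr_r0r1r0e1 x : x * r0 * r1 * r0 * e1 = x * r1 * r0 * e1 * r0 * e1.
Proof. by rewrite -!mulrA; congr (x * _); rewrite !mulrA r1r0e1r0e1. Qed.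

Lemma conj_fixes_e_gen (i : 'I_2) : conj_fixes r0 r1 (e_ e0 e1 i) [:: i].
Proof.
by rewrite /conj_fixes /rword big_seq1 /r_ /e_; case: ifP; rewrite ?r0e0 ?e0r0 ?r1e1 ?e1r1.
Qed.

Lemma conj_fixes_e0_long : conj_fixes r0 r1 e0 (alt_word ord_max 5).
Proof.
have r1r0r1r0r1e0 : r1 * r0 * r1 * r0 * r1 * e0 = e0.
  by rewrite mulr_r1e0 mulr_r0K mulr_r1e1 -mulr_r1e0 r1K mul1r.
have e0r1r0r1r0r1 : e0 * r1 * r0 * r1 * r0 * r1 = e0.
  by rewrite -e0e1r0 mulr_r0K mulr_e1r1 e0e1r0 mulr_r1K.
by rewrite /conj_fixes /rword !big_cons big_nil /= !mulr1 !mulrA r1r0r1r0r1e0 e0r1r0r1r0r1.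
Qed.

Lemma conj_fixes_e1_long : conj_fixes r0 r1 e1 (alt_word ord0 5).
Proof.
have r0r1r0r1r0e1 : r0 * r1 * r0 * r1 * r0 * e1 = e1 * r0 * e1.
  by rewrite mulr_r0r1r0e1 mulr_r1K r0K mul1r.
by rewrite /conj_fixes /rword !big_cons big_nil /= !mulr1 !mulrA r0r1r0r1r0e1
  e1r0e1r0r1 mulr_r0K mulr_r1K mulr_r0K.
Qed.

Lemma conj_fixes_e_long (i : 'I_2) : conj_fixes r0 r1 (e_ e0 e1 i) (alt_word (other i) 5).
Proof. by case: (ord2_cases i) => ->; [exact: conj_fixes_e0_long | exact: conj_fixes_e1_long]. Qed.

Lemma conj_fixes_e_stab_words (i : 'I_2) w :
  w \in stab_words i -> conj_fixes r0 r1 (e_ e0 e1 i) w.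
Proof.
rewrite !inE => /orP[|/orP[|/orP[|/orP[]]]] /eqP ->.
- by rewrite /conj_fixes /rword big_nil mul1r mulr1.
- exact: conj_fixes_e_gen.
- exact: conj_fixes_e_long.
- by rewrite -cat1s; apply: conj_fixes_cat; [exact: conj_fixes_e_gen | exact: conj_fixes_e_long].
- by rewrite -cats1; apply: conj_fixes_cat; [exact: conj_fixes_e_long | exact: conj_fixes_e_gen].
Qed.
End BrauerG2Relations.

Theorem lemma9p4 (A : pzRingType) (d r0 r1 e0 e1 : A) :
  BrG2_rel d r0 r1 e0 e1 ->
  forall (i : 'I_2) (w : seq 'I_2), in_stab i w ->
    rword r0 r1 w * e_ e0 e1 i * rword r0 r1 (rev w) = e_ e0 e1 i.
Proof.
move=> [_ [_ [r0K [r1K [r0e0 [e0r0 [r1e1 [e1r1 [_ [_ [r0e1e0 [e0e1r0 [_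
  [e1r0e1r0r1 [_ [r1r0e1r0e1 r1r0_order6]]]]]]]]]]]]]]]] i w.
rewrite in_stab_nf_word => /(in_stab_alt_word (nf_length_le6 w)) nf_stab.
have rword_nf := rword_nf_word r0K r1K r1r0_order6 w.
rewrite rword_nf (rword_rev_eq r0K r1K rword_nf).
exact: conj_fixes_e_stab_words.
Qed.
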